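(* Let $X$ and $Y$ be 2-dimensional non-positively curved piecewise Euclidean complexes and let $Z$ be a 1-dimensional complex which is a subcomplex of both $X$ and $Y$. If $Z$ is ultra-convex in $X$ (or in $Y$), then the space $X\sqcup_Z Y$ obtained by gluing $X$ and $Y$ along $Z$ is also a 2-dimensional non-positively curved complex.
   Context: A 2-dimensional piecewise Euclidean complex is non-positively curved if the link of every vertex contains no closed loop of length less than $2\pi$ (in the angular metric). For a non-positively curved piecewise Euclidean 2-complex $X$ and a 1-dimensional subcomplex $Y$, $Y$ is ultra-convex in $X$ if for every vertex $v\in Y$, any two points of $\mathrm{Lk}(v,Y)$ are at distance at least $2\pi$ in $\mathrm{Lk}(v,X)$. *)

From Stdlib Require Import Reals Lra List ClassicalEpsilon.
Open Scope R_scope.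
Set Implicit Arguments.

(** A 2-cell
    [f] is a convex Euclidean polygon whose boundary is the closed edge path
    [bdry f] (an edge traversed src->tgt if the flag is [true], tgt->src
    otherwise); [ang f k] is the interior angle of the polygon at the corner
    at the start of the k-th boundary edge (between sides k-1 and k). *)
Record PE2 := mkPE2 {
  vert : Type;
  edge : Type;
  face : Type;
  src : edge -> vert;
  tgt : edge -> vert;
  len : edge -> R;
  bdry : face -> list (edge * bool);
  ang : face -> nat -> R }.

Definition estart (X : PE2) (p : edge X * bool) : vert X :=
  if snd p then src X (fst p) else tgt X (fst p).
Definition eend (X : PE2) (p : edge X * bool) : vert X :=
  if snd p then tgt X (fst p) else src X (fst p).
Definition flip {E : Type} (p : E * bool) : E * bool := (fst p, negb (snd p)).

Definition rsum (n : nat) (g : nat -> R) : R :=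
  fold_right Rplus 0 (map g (seq 0 n)).

(** direction of the k-th side when side 0 points in direction 0 *)
Definition heading (X : PE2) (f : face X) (k : nat) : R :=
  rsum k (fun j => PI - ang X f (S j)).

Definition side_len (X : PE2) (f : face X) (k : nat) : R :=
  match nth_error (bdry X f) k with Some p => len X (fst p) | None => 0 end.

Definition convex_polygon_cell (X : PE2) (f : face X) : Prop :=
  let s := bdry X f in
  let n := length s in
  (3 <= n)%nat /\
  (forall k, (k < n)%nat -> 0 < ang X f k < PI) /\
  (forall k, (k < n)%nat -> exists a b, nth_error s k = Some a /\
       nth_error s ((k + 1) mod n) = Some b /\ eend X a = estart X b) /\
  rsum n (fun k => PI - ang X f k) = 2 * PI /\
  rsum n (fun k => side_len X f k * cos (heading X f k)) = 0 /\
  rsum n (fun k => side_len X f k * sin (heading X f k)) = 0.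

Definition is_PE (X : PE2) : Prop :=
  (forall e, 0 < len X e) /\ (forall f, convex_polygon_cell X f).

Definition PE_dim2 (X : PE2) : Prop := is_PE X /\ inhabited (face X).

Definition PE_dim1 (Z : PE2) : Prop :=
  is_PE Z /\ (face Z -> False) /\ inhabited (edge Z).

(** Vertices of Lk(v,X): edge-germs at v, i.e. oriented edges [p] with
    [estart p = v].  Edges of Lk(v,X): corners (f,k) of 2-cells at v; the
    corner (f,k) joins the germ of side k and the (reversed) germ of side
    k-1, and has length [ang f k] (angular metric). *)
Definition corner (X : PE2) (f : face X) (k : nat) (p q : edge X * bool) : Prop :=
  let s := bdry X f in
  let n := length s in
  (k < n)%nat /\ nth_error s k = Some p /\
  exists r, nth_error s ((k + n - 1) mod n) = Some r /\ q = flip r.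

(** [lwalk X v p r cs vs]: an edge path in Lk(v,X) from [p] to [r] through
    the link edges (corners) [cs], visiting the link vertices [vs] (the
    last vertex [r] excluded). *)
Inductive lwalk (X : PE2) (v : vert X) :
  edge X * bool -> edge X * bool -> list (face X * nat) -> list (edge X * bool) -> Prop :=
| lw_nil p : estart X p = v -> lwalk X v p p nil nil
| lw_cons p q r f k cs vs :
    estart X p = v ->
    (corner X f k p q \/ corner X f k q p) ->
    lwalk X v q r cs vs -> lwalk X v p r ((f, k) :: cs) (p :: vs).

Definition wlen (X : PE2) (cs : list (face X * nat)) : R :=
  fold_right (fun c acc => ang X (fst c) (snd c) + acc) 0 cs.

Definition npc (X : PE2) : Prop :=
  forall v p cs vs, lwalk X v p p cs vs -> cs <> nil -> NoDup cs -> NoDup vs ->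
    2 * PI <= wlen X cs.

Definition subcomplex (Z X : PE2) (iV : vert Z -> vert X) (iE : edge Z -> edge X) : Prop :=
  (forall a b, iV a = iV b -> a = b) /\
  (forall a b, iE a = iE b -> a = b) /\
  (forall e, src X (iE e) = iV (src Z e)) /\
  (forall e, tgt X (iE e) = iV (tgt Z e)) /\
  (forall e, len X (iE e) = len Z e).

Definition mapE (Z X : PE2) (iE : edge Z -> edge X) (p : edge Z * bool) : edge X * bool :=
  (iE (fst p), snd p).

(** Ultra-convexity of the 1-dim subcomplex [Z] in [X]: for every vertex v of
    Z, any two (distinct) points of Lk(v,Z) are at distance >= 2 pi in
    Lk(v,X), i.e. every path in Lk(v,X) joining them has length >= 2 pi. *)
Definition ultra_convex (Z X : PE2) (iV : vert Z -> vert X) (iE : edge Z -> edge X) : Prop :=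
  forall v (p q : edge Z * bool), estart Z p = v -> estart Z q = v -> p <> q ->
    forall cs vs, lwalk X (iV v) (@mapE Z X iE p) (@mapE Z X iE q) cs vs -> 2 * PI <= wlen X cs.

Section Glue.
Variables (X Y Z : PE2)
  (iXV : vert Z -> vert X) (iXE : edge Z -> edge X)
  (iYV : vert Z -> vert Y) (iYE : edge Z -> edge Y).

Definition gvert : Type := (vert X + {y : vert Y | ~ exists z, iYV z = y})%type.
Definition gedge : Type := (edge X + {e : edge Y | ~ exists z, iYE z = e})%type.

Definition gV (y : vert Y) : gvert :=
  match excluded_middle_informative (exists z, iYV z = y) with
  | left H => inl (iXV (proj1_sig (constructive_indefinite_description _ H)))
  | right H => inr (exist _ y H)
  end.

Definition gE (e : edge Y) : gedge :=
  match excluded_middle_informative (exists z, iYE z = e) with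
  | left H => inl (iXE (proj1_sig (constructive_indefinite_description _ H)))
  | right H => inr (exist _ e H)
  end.

Definition glue : PE2 := {|
  vert := gvert;
  edge := gedge;
  face := (face X + face Y)%type;
  src := fun e => match e with inl e => inl (src X e) | inr e => gV (src Y (proj1_sig e)) end;
  tgt := fun e => match e with inl e => inl (tgt X e) | inr e => gV (tgt Y (proj1_sig e)) end;
  len := fun e => match e with inl e => len X e | inr e => len Y (proj1_sig e) end;
  bdry := fun f => match f with
           | inl f => map (fun p => (inl (fst p), snd p)) (bdry X f)
           | inr f => map (fun p => (gE (fst p), snd p)) (bdry Y f) end;
  ang := fun f => match f with inl f => ang X f | inr f => ang Y f end |}.
End Glue.

From Stdlib Require Import Reals Lra List Permutation ClassicalEpsilon.
Import ListNotations.
Open Scope R_scope.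

(* Every 2-cell of the glued complex comes from X or from Y, so a simple cycle
   in a vertex link either uses corners of one side only, and is then a simple
   cycle in a link of X or of Y, of length >= 2 pi by non-positive curvature;
   or it uses corners of both sides.  In the second case it contains a maximal
   arc of corners of the ultra-convex side, whose two distinct endpoints are
   germs where both sides meet, i.e. germs of Z; by ultra-convexity this arc
   alone has length >= 2 pi.  The argument only uses that the complex is
   covered by two cell embeddings of non-positively curved complexes that meet
   along germs of an ultra-convex subcomplex of one of them. *)

Section Lists.
Context {A : Type} (P : A -> Prop).

Lemma Forall_or_exists_not (l : list A) : Forall P l \/ exists x, In x l /\ ~ P x.
Proof.
  induction l as [|x l [IH|(y & Hy & Py)]]; auto.
  - destruct (classic (P x)); [left; auto | right; exists x; simpl; auto].
  - right; exists y; simpl; auto.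
Qed.

Lemma adjacent_switch (y : A) (l : list A) : ~ P y -> (exists x, In x l /\ P x) ->
  exists C D f t, y :: l = C ++ f :: t :: D /\ ~ P f /\ P t.
Proof.
  revert y. induction l as [|x l IH]; intros y Py [z [Hz Pz]]; [destruct Hz|].
  destruct (classic (P x)) as [Px|Px].
  - exists [], l, y, x. auto.
  - destruct Hz as [->|Hz]; [contradiction|].
    destruct (IH x Px) as (C & D & f & t & E & Pf & Pt); [eauto|].
    exists (y :: C), D, f, t. rewrite E. auto.
Qed.

Lemma split_at_first_not (l : list A) : (exists d, In d l /\ ~ P d) ->
  exists N d R, l = N ++ d :: R /\ ~ P d /\ Forall P N.
Proof.
  induction l as [|x l IH]; intros [d [Hd Pd]]; [destruct Hd|].
  destruct (classic (P x)) as [Px|Px].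
  - destruct Hd as [->|Hd]; [contradiction|].
    destruct IH as (N & d' & R & -> & Pd' & HN); [eauto|].
    exists (x :: N), d', R. auto.
  - exists [], x, l. auto.
Qed.

End Lists.

Section Links.
Context {G : PE2}.

Lemma wlen_app (a b : list (face G * nat)) : wlen G (a ++ b) = wlen G a + wlen G b.
Proof. induction a as [|c a IH]; simpl; [lra|]. rewrite IH; lra. Qed.

Lemma wlen_perm {a b : list (face G * nat)} : Permutation a b -> wlen G a = wlen G b.
Proof. induction 1; simpl; lra. Qed.

Lemma lwalk_start {v a b cs vs} : lwalk G v a b cs vs -> estart G a = v.
Proof. destruct 1; assumption. Qed.

Lemma lwalk_end {v a b cs vs} : lwalk G v a b cs vs -> estart G b = v.
Proof. induction 1; assumption. Qed.

Lemma lwalk_app {v a b c cs1 vs1 cs2 vs2} :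
  lwalk G v a b cs1 vs1 -> lwalk G v b c cs2 vs2 -> lwalk G v a c (cs1 ++ cs2) (vs1 ++ vs2).
Proof. induction 1; simpl; intros; [assumption|]. econstructor; eauto. Qed.

Lemma lwalk_split {v a c cs1 cs2 vs} : lwalk G v a c (cs1 ++ cs2) vs ->
  exists b vs1 vs2, vs = vs1 ++ vs2 /\ lwalk G v a b cs1 vs1 /\ lwalk G v b c cs2 vs2.
Proof.
  revert a vs. induction cs1 as [|c0 cs1 IH]; simpl; intros a vs W.
  - exists a, [], vs. split; [reflexivity|]. split; [constructor; exact (lwalk_start W) | exact W].
  - inversion W as [|? q ? f k ? vs' Ha Hc W']; subst.
    destruct (IH _ _ W') as (b & vs1 & vs2 & -> & W1 & W2).
    exists b, (a :: vs1), vs2. split; [reflexivity|]. split; [econstructor; eauto | exact W2].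
Qed.

Lemma lwalk_rotate {v p cs1 cs2 vs} : lwalk G v p p (cs1 ++ cs2) vs ->
  exists q vs', lwalk G v q q (cs2 ++ cs1) vs' /\ Permutation vs vs'.
Proof.
  intros W. destruct (lwalk_split W) as (q & vs1 & vs2 & -> & W1 & W2).
  exists q, (vs2 ++ vs1). split; [exact (lwalk_app W2 W1) | apply Permutation_app_comm].
Qed.

Definition link_incident (c : face G * nat) (g : edge G * bool) : Prop :=
  exists h, corner G (fst c) (snd c) g h \/ corner G (fst c) (snd c) h g.

Lemma lwalk_head_incident {v a b c cs vs} : lwalk G v a b (c :: cs) vs -> link_incident c a.
Proof. intros W; inversion W as [|? q ? ? ? ? ? _ Hc _]; subst. exists q; exact Hc. Qed.

Lemma lwalk_last_incident {v a b c cs vs} : lwalk G v a b (cs ++ [c]) vs -> link_incident c b.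
Proof.
  intros W. destruct (lwalk_split W) as (b0 & vs1 & vs2 & _ & _ & W2).
  inversion W2 as [|? q ? ? ? ? ? _ Hc Wq]; subst. inversion Wq; subst.
  exists b0. simpl. tauto.
Qed.

Lemma lwalk_wlen_nonneg {v a b cs vs} : is_PE G -> lwalk G v a b cs vs -> 0 <= wlen G cs.
Proof.
  intros [_ Hcell] W. induction W as [|p q r f k cs vs _ Hc _ IH]; simpl; [lra|].
  assert (0 < ang G f k); [|lra].
  destruct (Hcell f) as (_ & Hang & _).
  destruct Hc as [[Hk _]|[Hk _]]; exact (proj1 (Hang k Hk)).
Qed.

End Links.

Section Arcs.
Context {G : PE2} (P : face G * nat -> Prop).

Definition two_sided (g : edge G * bool) : Prop :=
  exists c1 c2, P c1 /\ ~ P c2 /\ link_incident c1 g /\ link_incident c2 g.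

Lemma cycle_rotate_to_switch {v p cs vs} : lwalk G v p p cs vs ->
  (exists c, In c cs /\ P c) -> (exists c, In c cs /\ ~ P c) ->
  exists q t m f vs', lwalk G v q q (t :: m ++ [f]) vs' /\
    Permutation cs (t :: m ++ [f]) /\ Permutation vs vs' /\ P t /\ ~ P f.
Proof.
  intros W [x [Hx Px]] [y [Hy Py]].
  destruct (in_split _ _ Hy) as (A & B & ->).
  destruct (lwalk_rotate W) as (q1 & vs1 & W1 & Hvs1).
  assert (Hx' : In x (B ++ A)).
  { rewrite in_app_iff; apply in_app_or in Hx. destruct Hx as [Hx|[<-|Hx]]; tauto. }
  destruct (adjacent_switch P y (B ++ A) Py) as (C & D & f & t & E & Pf & Pt); [eauto|].
  assert (W1' : lwalk G v q1 q1 ((C ++ [f]) ++ t :: D) vs1).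
  { rewrite <- app_assoc; simpl; rewrite <- E; exact W1. }
  destruct (lwalk_rotate W1') as (q & vs' & W2 & Hvs2).
  exists q, t, (D ++ C), f, vs'.
  split; [rewrite <- app_assoc; exact W2|].
  split; [|split; [exact (perm_trans Hvs1 Hvs2) | auto]].
  apply (perm_trans (Permutation_app_comm _ _)). simpl; rewrite E.
  apply (perm_trans (Permutation_app_comm _ _)). simpl.
  apply Permutation_cons_append.
Qed.

Lemma cycle_split_at_switch {v p t m f vs} : lwalk G v p p (t :: m ++ [f]) vs -> NoDup vs ->
  P t -> ~ P f ->
  exists q xs rest vs1 vs2, t :: m ++ [f] = xs ++ rest /\
    lwalk G v p q xs vs1 /\ lwalk G v q p rest vs2 /\ p <> q /\
    Forall P xs /\ two_sided p /\ two_sided q.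
Proof.
  intros W Hnd Pt Pf.
  destruct (split_at_first_not P (t :: m ++ [f])) as (xs & e & R & E & Pe & Hxs).
  { exists f. split; [right; apply in_or_app; right; left; reflexivity | exact Pf]. }
  destruct xs as [|x xs0]; [injection E as <- _; contradiction|].
  pose proof W as W0. rewrite E in W0.
  destruct (lwalk_split W0) as (q & vs1 & vs2 & Evs & W1 & W2).
  exists q, (x :: xs0), (e :: R), vs1, vs2.
  do 3 (split; [assumption|]).
  split.
  { (* p and q head the vertex lists of the two sub-walks, and the cycle is simple. *)
    intros <-.
    inversion W1 as [|? ? ? ? ? ? vs1' _ _ _]; inversion W2 as [|? ? ? ? ? ? vs2' _ _ _]; subst.
    apply NoDup_cons_iff in Hnd as [Hnot _]. apply Hnot, in_or_app; right; left; reflexivity. }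
  split; [exact Hxs|].
  split.
  - exists t, f. do 2 (split; [assumption|]).
    split; [exact (lwalk_head_incident W) | exact (lwalk_last_incident (cs := t :: m) W)].
  - destruct (exists_last (l := x :: xs0) ltac:(discriminate)) as (L & l & EL).
    rewrite EL in W1, Hxs. apply Forall_app in Hxs as [_ Hl].
    exists l, e. split; [now inversion Hl|]. split; [assumption|].
    split; [exact (lwalk_last_incident W1) | exact (lwalk_head_incident W2)].
Qed.

Lemma mixed_cycle_arc {v p cs vs} : lwalk G v p p cs vs -> NoDup vs ->
  (exists c, In c cs /\ P c) -> (exists c, In c cs /\ ~ P c) ->
  exists p' q xs rest vs1 vs2, wlen G cs = wlen G xs + wlen G rest /\
    lwalk G v p' q xs vs1 /\ lwalk G v q p' rest vs2 /\ p' <> q /\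
    Forall P xs /\ two_sided p' /\ two_sided q.
Proof.
  intros W Hnd Hin Hout.
  destruct (cycle_rotate_to_switch W Hin Hout) as (p' & t & m & f & vs' & W' & Hcs & Hvs & Pt & Pf).
  destruct (cycle_split_at_switch W' (Permutation_NoDup Hvs Hnd) Pt Pf)
    as (q & xs & rest & vs1 & vs2 & E & W1 & W2 & Hpq & Hxs & Sp & Sq).
  exists p', q, xs, rest, vs1, vs2.
  split; [rewrite (wlen_perm Hcs), E; apply wlen_app | tauto].
Qed.

End Arcs.

Section Subcomplex.
Context {Z X : PE2} {iV : vert Z -> vert X} {iE : edge Z -> edge X} (sub : subcomplex Z X iV iE).

Lemma mapE_inj a b : mapE Z X iE a = mapE Z X iE b -> a = b.
Proof.
  destruct sub as (_ & HE & _). destruct a as [a s], b as [b s']; unfold mapE; simpl.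
  intros E; injection E as E ->. rewrite (HE _ _ E). reflexivity.
Qed.

Lemma estart_mapE p : estart X (mapE Z X iE p) = iV (estart Z p).
Proof. destruct sub as (_ & _ & Hs & Ht & _). destruct p as [e []]; apply Hs || apply Ht. Qed.

Lemma eend_mapE p : eend X (mapE Z X iE p) = iV (eend Z p).
Proof. destruct sub as (_ & _ & Hs & Ht & _). destruct p as [e []]; apply Hs || apply Ht. Qed.

End Subcomplex.

Record cell_embedding (G H : PE2) (iV : vert G -> vert H) (iE : edge G -> edge H)
    (iF : face G -> face H) : Prop := {
  emb_sub : subcomplex G H iV iE;
  emb_bdry : forall f, bdry H (iF f) = map (mapE G H iE) (bdry G f);
  emb_ang : forall f, ang H (iF f) = ang G f }.
Arguments emb_sub {G H iV iE iF}.
Arguments emb_bdry {G H iV iE iF}.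
Arguments emb_ang {G H iV iE iF}.

Definition mapC (G H : PE2) (iF : face G -> face H) (c : face G * nat) : face H * nat :=
  (iF (fst c), snd c).

Lemma rsum_ext n g g' : (forall k, g k = g' k) -> rsum n g = rsum n g'.
Proof. intros E; unfold rsum; f_equal; apply map_ext; exact E. Qed.

Section Embedding.
Context {G H : PE2} {iV : vert G -> vert H} {iE : edge G -> edge H} {iF : face G -> face H}
  (emb : cell_embedding G H iV iE iF).

Lemma convex_polygon_cell_embed f : convex_polygon_cell G f -> convex_polygon_cell H (iF f).
Proof.
  intros (Hn & Hang & Hadj & Hext & Hx & Hy).
  assert (Hside : forall k, side_len H (iF f) k = side_len G f k).
  { intros k; unfold side_len. rewrite (emb_bdry emb), nth_error_map.
    destruct (nth_error (bdry G f) k) as [p|]; [apply (emb_sub emb) | reflexivity]. }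
  assert (Hhead : forall k, heading H (iF f) k = heading G f k).
  { intros k; unfold heading. rewrite (emb_ang emb). reflexivity. }
  unfold convex_polygon_cell. rewrite (emb_bdry emb), length_map, (emb_ang emb).
  split; [exact Hn|]. split; [exact Hang|]. split.
  - intros k Hk. destruct (Hadj k Hk) as (a & b & Ea & Eb & Eab).
    exists (mapE G H iE a), (mapE G H iE b). rewrite !nth_error_map, Ea, Eb.
    split; [reflexivity|]. split; [reflexivity|].
    rewrite (eend_mapE (emb_sub emb)), (estart_mapE (emb_sub emb)), Eab. reflexivity.
  - split; [exact Hext|]. split.
    + rewrite <- Hx. apply rsum_ext; intros k. rewrite Hside, Hhead. reflexivity.
    + rewrite <- Hy. apply rsum_ext; intros k. rewrite Hside, Hhead. reflexivity.
Qed.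

Lemma corner_embed_inv {f k g q} : corner H (iF f) k g q ->
  exists g' q', g = mapE G H iE g' /\ q = mapE G H iE q' /\ corner G f k g' q'.
Proof.
  intros (Hk & Hg & r & Hr & ->). rewrite (emb_bdry emb), length_map in *.
  rewrite nth_error_map in Hg, Hr.
  destruct (nth_error (bdry G f) k) as [g'|] eqn:E1; [|discriminate].
  destruct (nth_error (bdry G f) ((k + _ - 1) mod _)) as [r'|] eqn:E2; [|discriminate].
  simpl in Hg, Hr. injection Hg as <-. injection Hr as <-.
  exists g', (flip r'). split; [reflexivity|]. split; [reflexivity|].
  split; [exact Hk|]. split; [exact E1|]. exists r'. auto.
Qed.

Lemma incident_embed_inv {c g} : link_incident c g -> (exists f, fst c = iF f) ->
  exists g', g = mapE G H iE g'.
Proof.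
  destruct c as [fc k]; intros (h & Hc) [f Ef]; simpl in *; subst fc.
  destruct Hc as [Hc|Hc]; destruct (corner_embed_inv Hc) as (g1 & g2 & E1 & E2 & _); eauto.
Qed.

Lemma wlen_mapC cs : wlen H (map (mapC G H iF) cs) = wlen G cs.
Proof.
  induction cs as [|c cs IH]; simpl; [reflexivity|].
  rewrite (emb_ang emb), IH. reflexivity.
Qed.

Lemma lwalk_embed_inv {v a b cs vs} : lwalk H v (mapE G H iE a) b cs vs ->
  Forall (fun c => exists f, fst c = iF f) cs ->
  exists b' cs' vs', b = mapE G H iE b' /\ lwalk G (estart G a) a b' cs' vs' /\
    cs = map (mapC G H iF) cs' /\ vs = map (mapE G H iE) vs'.
Proof.
  remember (mapE G H iE a) as a0 eqn:Ea. intros W. revert a Ea.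
  induction W as [p Hp | p q r f k cs vs Hp Hc W IH]; intros a Ea Himg; subst p.
  - exists a, [], []. split; [reflexivity|]. split; [constructor; reflexivity | auto].
  - apply Forall_cons_iff in Himg as [[f' Ef] Himg]; simpl in Ef; subst f.
    assert (Hq : exists q', q = mapE G H iE q' /\ (corner G f' k a q' \/ corner G f' k q' a)).
    { destruct Hc as [Hc|Hc]; destruct (corner_embed_inv Hc) as (g1 & g2 & E1 & E2 & Hc');
        [apply (mapE_inj (emb_sub emb)) in E1 | apply (mapE_inj (emb_sub emb)) in E2];
        subst; eauto. }
    destruct Hq as (q' & -> & Hc').
    destruct (IH q' eq_refl Himg) as (b' & cs' & vs' & Eb & W' & Ecs & Evs).
    assert (Hst : estart G q' = estart G a).
    { apply (proj1 (emb_sub emb)). rewrite <- !(estart_mapE (emb_sub emb)), Hp.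
      exact (lwalk_start W). }
    exists b', ((f', k) :: cs'), (a :: vs'). split; [exact Eb|].
    split; [econstructor; eauto; rewrite <- Hst; exact W' | subst; auto].
Qed.

Lemma npc_embed_cycle {v p cs vs} :
  npc G -> lwalk H v p p cs vs -> cs <> [] -> NoDup cs -> NoDup vs ->
  Forall (fun c => exists f, fst c = iF f) cs -> 2 * PI <= wlen H cs.
Proof.
  intros Hnpc W Hne Hcs Hvs Himg.
  destruct cs as [|c cs0]; [contradiction|].
  destruct (incident_embed_inv (lwalk_head_incident W) (Forall_inv Himg)) as [p' ->].
  destruct (lwalk_embed_inv W Himg) as (b & cs' & vs' & Eb & W' & Ecs & ->).
  apply (mapE_inj (emb_sub emb)) in Eb; subst b.
  rewrite Ecs in Hcs |- *. rewrite wlen_mapC.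
  apply (Hnpc _ _ _ _ W').
  - intros ->. discriminate.
  - exact (NoDup_map_inv _ _ Hcs).
  - exact (NoDup_map_inv _ _ Hvs).
Qed.

Lemma ultra_convex_embed_arc {Z : PE2} {jV : vert Z -> vert G} {jE : edge Z -> edge G}
  {v z1 z2 xs vs} :
  subcomplex Z G jV jE -> ultra_convex Z G jV jE ->
  lwalk H v (mapE G H iE (mapE Z G jE z1)) (mapE G H iE (mapE Z G jE z2)) xs vs ->
  Forall (fun c => exists f, fst c = iF f) xs -> z1 <> z2 -> 2 * PI <= wlen H xs.
Proof.
  intros Hsub Huc W Himg Hz.
  destruct (lwalk_embed_inv W Himg) as (b & xs' & vs' & Eb & W' & -> & _).
  apply (mapE_inj (emb_sub emb)) in Eb; subst b.
  rewrite wlen_mapC.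
  pose proof (lwalk_end W') as Hend. rewrite (estart_mapE Hsub z1) in W'.
  rewrite (estart_mapE Hsub z2), (estart_mapE Hsub z1) in Hend.
  apply (Huc (estart Z z1) z1 z2 eq_refl (proj1 Hsub _ _ Hend) Hz _ _ W').
Qed.

End Embedding.

Section Cover.
Context {H G1 G2 Z : PE2}
  {iV1 : vert G1 -> vert H} {iE1 : edge G1 -> edge H} {iF1 : face G1 -> face H}
  {iV2 : vert G2 -> vert H} {iE2 : edge G2 -> edge H} {iF2 : face G2 -> face H}
  {jV : vert Z -> vert G1} {jE : edge Z -> edge G1}
  (emb1 : cell_embedding G1 H iV1 iE1 iF1) (emb2 : cell_embedding G2 H iV2 iE2 iF2)
  (cover : forall f, (exists f1, f = iF1 f1) \/ (exists f2, f = iF2 f2))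
  (seam : forall g1 g2, mapE G1 H iE1 g1 = mapE G2 H iE2 g2 -> exists z, g1 = mapE Z G1 jE z).

Let on_G1 (c : face H * nat) : Prop := exists f1, fst c = iF1 f1.

Lemma on_G2_of_not_on_G1 c : ~ on_G1 c -> exists f2, fst c = iF2 f2.
Proof. intros Hc. destruct (cover (fst c)) as [Hf|Hf]; [contradiction | exact Hf]. Qed.

Lemma two_sided_seam g : two_sided on_G1 g -> exists z, g = mapE G1 H iE1 (mapE Z G1 jE z).
Proof.
  intros (c1 & c2 & P1 & P2 & I1 & I2).
  destruct (incident_embed_inv emb1 I1 P1) as [g1 ->].
  destruct (incident_embed_inv emb2 I2 (on_G2_of_not_on_G1 _ P2)) as [g2 E].
  destruct (seam _ _ E) as [z ->]. eauto.
Qed.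

Theorem npc_of_cover : is_PE H -> subcomplex Z G1 jV jE -> ultra_convex Z G1 jV jE ->
  npc G1 -> npc G2 -> npc H.
Proof.
  intros HPE Hsub Huc Hnpc1 Hnpc2 v p cs vs W Hne Hcs Hvs.
  destruct (Forall_or_exists_not on_G1 cs) as [Hall1|Hout].
  { exact (npc_embed_cycle emb1 Hnpc1 W Hne Hcs Hvs Hall1). }
  destruct (Forall_or_exists_not (fun c => ~ on_G1 c) cs) as [Hall2|Hin].
  { apply (npc_embed_cycle emb2 Hnpc2 W Hne Hcs Hvs).
    exact (Forall_impl _ on_G2_of_not_on_G1 Hall2). }
  assert (Hin' : exists c, In c cs /\ on_G1 c).
  { destruct Hin as (c & Hc & Pc). exists c. split; [exact Hc | exact (NNPP _ Pc)]. }
  destruct (mixed_cycle_arc on_G1 W Hvs Hin' Hout)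
    as (p' & q & xs & rest & vs1 & vs2 & Hw & W1 & W2 & Hpq & Hxs & Sp & Sq).
  destruct (two_sided_seam _ Sp) as [z1 ->]. destruct (two_sided_seam _ Sq) as [z2 ->].
  assert (Hz : z1 <> z2) by (intros ->; contradiction).
  pose proof (ultra_convex_embed_arc emb1 Hsub Huc W1 Hxs Hz).
  pose proof (lwalk_wlen_nonneg HPE W2). lra.
Qed.

End Cover.

(* The specification through which the choice-based maps [gV] and [gE] of the
   pushout are used: cells of Z are sent to their copy in X, other cells of Y
   to themselves. *)
Definition glues_along {A B C : Type} (iA : C -> A) (iB : C -> B)
    (g : B -> A + {b : B | ~ exists c, iB c = b}) : Prop :=
  (forall c, g (iB c) = inl (iA c)) /\
  (forall b, (~ exists c, iB c = b) -> exists nb, g b = inr (exist _ b nb)).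

Lemma glues_along_inj {A B C : Type} (iA : C -> A) (iB : C -> B) g :
  (forall c c', iA c = iA c' -> c = c') -> glues_along iA iB g -> forall b b', g b = g b' -> b = b'.
Proof.
  intros HA [Himg Hout] b b' E.
  destruct (classic (exists c, iB c = b)) as [[c <-]|nb];
  destruct (classic (exists c, iB c = b')) as [[c' <-]|nb'].
  - rewrite !Himg in E. injection E as E. rewrite (HA _ _ E). reflexivity.
  - destruct (Hout _ nb') as [h' Eh']. rewrite Himg, Eh' in E. discriminate.
  - destruct (Hout _ nb) as [h Eh]. rewrite Himg, Eh in E. discriminate.
  - destruct (Hout _ nb) as [h Eh], (Hout _ nb') as [h' Eh']. rewrite Eh, Eh' in E.
    injection E as E. exact E.
Qed.

Section Glue.
Context {X Y Z : PE2} {iXV : vert Z -> vert X} {iXE : edge Z -> edge X}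
  {iYV : vert Z -> vert Y} {iYE : edge Z -> edge Y}
  (HX : subcomplex Z X iXV iXE) (HY : subcomplex Z Y iYV iYE).

Local Notation XY := (glue X Y Z iXV iXE iYV iYE).

Lemma gV_glues_along : glues_along iXV iYV (gV X Y Z iXV iYV).
Proof.
  split.
  - intros z. unfold gV. destruct (excluded_middle_informative _) as [Hz|Hz]; [|exfalso; eauto].
    destruct (constructive_indefinite_description _ Hz) as [z' Ez]; simpl.
    rewrite (proj1 HY _ _ Ez). reflexivity.
  - intros y ny. unfold gV. destruct (excluded_middle_informative _); [contradiction | eauto].
Qed.

Lemma gE_glues_along : glues_along iXE iYE (gE X Y Z iXE iYE).
Proof.
  split.
  - intros z. unfold gE. destruct (excluded_middle_informative _) as [Hz|Hz]; [|exfalso; eauto].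
    destruct (constructive_indefinite_description _ Hz) as [z' Ez]; simpl.
    rewrite (proj1 (proj2 HY) _ _ Ez). reflexivity.
  - intros e ne. unfold gE. destruct (excluded_middle_informative _); [contradiction | eauto].
Qed.

Lemma glue_embedding_left : cell_embedding X XY inl inl inl.
Proof.
  split; [|reflexivity|reflexivity].
  repeat split; intros a b E; injection E; auto.
Qed.

Lemma glue_embedding_right : cell_embedding Y XY (gV X Y Z iXV iYV) (gE X Y Z iXE iYE) inr.
Proof.
  split; [|reflexivity|reflexivity].
  destruct HX as (HXV & HXE & HXs & HXt & HXl), HY as (_ & _ & HYs & HYt & HYl).
  destruct gV_glues_along as [HVimg _], gE_glues_along as [HEimg HEout].
  split; [exact (glues_along_inj _ _ _ HXV gV_glues_along)|].
  split; [exact (glues_along_inj _ _ _ HXE gE_glues_along)|].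
  split; [|split]; intros e; destruct (classic (exists z, iYE z = e)) as [[z <-]|ne];
    try (destruct (HEout _ ne) as [h ->]; reflexivity); rewrite HEimg; simpl.
  - rewrite HXs, HYs, HVimg. reflexivity.
  - rewrite HXt, HYt, HVimg. reflexivity.
  - rewrite HXl, HYl. reflexivity.
Qed.

Lemma glue_faces_cover (f : face XY) : (exists fx, f = inl fx) \/ (exists fy, f = inr fy).
Proof. destruct f as [f|f]; eauto. Qed.

Lemma glue_seam {a b} : mapE X XY inl a = mapE Y XY (gE X Y Z iXE iYE) b ->
  exists z, a = mapE Z X iXE z /\ b = mapE Z Y iYE z.
Proof.
  destruct a as [ea s], b as [eb s']. unfold mapE; simpl. intros E; injection E as E <-.
  destruct (classic (exists z, iYE z = eb)) as [[z <-]|ne].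
  - rewrite (proj1 gE_glues_along) in E. injection E as ->. exists (z, s). auto.
  - destruct (proj2 gE_glues_along _ ne) as [h Eh]. rewrite Eh in E. discriminate.
Qed.

Lemma glue_is_PE : is_PE X -> is_PE Y -> is_PE XY.
Proof.
  intros [LX PX] [LY PY]. split.
  - intros [e|[e ne]]; simpl; auto.
  - intros [f|f].
    + exact (convex_polygon_cell_embed glue_embedding_left f (PX f)).
    + exact (convex_polygon_cell_embed glue_embedding_right f (PY f)).
Qed.

End Glue.

Theorem lemma7p9 (X Y Z : PE2)
  (iXV : vert Z -> vert X) (iXE : edge Z -> edge X)
  (iYV : vert Z -> vert Y) (iYE : edge Z -> edge Y) :
  PE_dim2 X -> PE_dim2 Y -> PE_dim1 Z ->
  npc X -> npc Y ->
  subcomplex Z X iXV iXE -> subcomplex Z Y iYV iYE ->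
  (ultra_convex Z X iXV iXE \/ ultra_convex Z Y iYV iYE) ->
  PE_dim2 (glue X Y Z iXV iXE iYV iYE) /\ npc (glue X Y Z iXV iXE iYV iYE).
Proof.
  (* Only the germs of Z enter the argument. *)
  intros [PEX [fX]] [PEY _] _ NX NY HX HY UC.
  pose proof (glue_is_PE HX HY PEX PEY) as PEG.
  split; [exact (conj PEG (inhabits (inl fX)))|].
  destruct UC as [UX|UY].
  - refine (npc_of_cover glue_embedding_left (glue_embedding_right HX HY)
      glue_faces_cover _ PEG HX UX NX NY).
    intros a b E. destruct (glue_seam HY E) as (z & Ea & _). eauto.
  - refine (npc_of_cover (glue_embedding_right HX HY) glue_embedding_left
      (fun f => proj1 (or_comm _ _) (glue_faces_cover f)) _ PEG HY UY NY NX).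
    intros b a E. destruct (glue_seam HY (eq_sym E)) as (z & _ & Eb). eauto.
Qed.
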